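(* Let $\beta>2\alpha>0$ and let $\varphi_N:\mathbb{R}^{s_N}\to\mathbb{R}$ be $\varphi_N(x)=\frac12x^TAx-\sum_{k=1}^{s_N}\log\cosh(x^TAe_k)$. The Hessian matrix of $\varphi_N$ at $x=(0,\dots,0)$ is positive definite if $\beta+2\alpha<1$, positive semi-definite if $\beta+2\alpha=1$, and not positive (semi-)definite if $\beta+2\alpha>1$.
   Context: $A$ is the $s_N\times s_N$ symmetric circulant matrix $A=\beta I+\alpha(P+P^T)$, where $P$ is the cyclic shift matrix (so $A_{kk}=\beta$, $A_{k,k\pm1}=\alpha$ with indices mod $s_N$); $e_k$ are the standard basis vectors of $\mathbb{R}^{s_N}$. *)

From HB Require Import structures.
From mathcomp Require Import all_boot all_order all_algebra.
From mathcomp Require Import all_classical all_reals all_analysis.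
Unset Printing Implicit Defensive.
Import Order.TTheory GRing.Theory Num.Theory.
Import numFieldNormedType.Exports.
Local Open Scope ring_scope.

Definition cosh {R : realType} (x : R) : R := (expR x + expR (- x)) / 2.

Definition shift_mx {R : realType} (n : nat) : 'M[R]_n :=
  \matrix_(i, j) ((j == ordS i)%:R).

Definition circA {R : realType} (n : nat) (alpha beta : R) : 'M[R]_n :=
  beta%:M + alpha *: (shift_mx n + (shift_mx n)^T).

Definition ebasis {R : realType} (n : nat) (k : 'I_n) : 'cV[R]_n := delta_mx k 0.

Definition phiN {R : realType} (n : nat) (alpha beta : R) (x : 'cV[R]_n) : R :=
  2^-1 * (x^T *m circA n alpha beta *m x) 0 0
  - \sum_(k < n) ln (cosh ((x^T *m circA n alpha beta *m ebasis n k) 0 0)).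

Definition hessian {R : realType} (n : nat) (f : 'cV[R]_n -> R) (x : 'cV[R]_n) : 'M[R]_n :=
  \matrix_(i, j) ('D_(ebasis n i) (fun y => 'D_(ebasis n j) f y) x).

Definition posdef {R : realType} (n : nat) (H : 'M[R]_n) : Prop :=
  forall v : 'cV[R]_n, v != 0 -> 0 < (v^T *m H *m v) 0 0.

Definition possemidef {R : realType} (n : nat) (H : 'M[R]_n) : Prop :=
  forall v : 'cV[R]_n, 0 <= (v^T *m H *m v) 0 0.

From HB Require Import structures.
From mathcomp Require Import all_boot all_order all_algebra.
From mathcomp Require Import all_classical all_reals all_analysis.
From mathcomp Require Import fingroup perm.
From mathcomp Require Import ring lra.
Import Order.TTheory GRing.Theory Num.Theory.
Import numFieldNormedType.Exports.
Local Open Scope ring_scope.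

Set Implicit Arguments.
Unset Strict Implicit.

(* Since (ln cosh)''(0) = 1, the Hessian of phi_N at 0 is (A + A^T)/2 - A A^T,
   that is A - A^2.  For A = beta I + alpha (P + P^T) with P
   orthogonal, the quadratic form of A - A^2 is the sum of squares
     mu (1 - mu)/4 |v + P v|^2 + m (1 - m)/4 |v - P v|^2 + alpha^2 |P v - P^T v|^2
   with mu = beta + 2 alpha and m = beta - 2 alpha.  Its coefficients are
   nonnegative when 0 <= m <= mu <= 1, the first two are positive when mu < 1
   (and |v + P v|^2 + |v - P v|^2 = 4 |v|^2), while for mu > 1 the constant
   vector, fixed by the cyclic shift P, makes the form negative. *)

Section LineDerivative.
Variables (R : numFieldType) (V W : normedModType R).

Lemma is_derive_line (f : V -> W) (x v : V) (d : W) :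
  is_derive (0 : R) 1 (fun h => f (h *: v + x)) d -> is_derive x v f d.
Proof.
move=> [line_derivable line_derive]; split; first exact/derivable1P.
rewrite -line_derive /derive; do 2 f_equal; apply/funext => h /=.
by rewrite addr0 scale0r add0r [_%:A]mulr1.
Qed.

End LineDerivative.

Section RealDerivative.
Variable R : realType.

Lemma is_derive_affine (c d x : R) : is_derive x 1 (fun h => h * c + d) c.
Proof.
have -> : (fun h => h * c + d) = c \*: id + cst d.
  by apply/funext => h /=; rewrite mulrC.
by apply: is_derive_eq; rewrite addr0 [_ *: _]mulr1.
Qed.

Lemma is_derive_comp_affine (f : R -> R) (c d x a : R) :
  is_derive (x * c + d) 1 f a -> is_derive x 1 (fun h => f (h * c + d)) (a * c).
Proof.
move=> fa.
exact: (is_derive1_comp (g := fun h => h * c + d) fa (is_derive_affine c d x)).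
Qed.

Definition sinh (x : R) : R := (expR x - expR (- x)) / 2.
Definition tanh (x : R) : R := sinh x / cosh x.

Lemma cosh_gt0 (x : R) : 0 < cosh x.
Proof. by rewrite divr_gt0 // addr_gt0 // expR_gt0. Qed.

Lemma cosh0 : cosh 0 = 1 :> R.
Proof. by rewrite /cosh oppr0 expR0 divff. Qed.

Lemma sinh0 : sinh 0 = 0 :> R.
Proof. by rewrite /sinh oppr0 subrr mul0r. Qed.

Lemma is_derive_expRN (x : R) : is_derive x 1 (fun y => expR (- y)) (- expR (- x)).
Proof.
have := is_derive1_comp (is_derive_expR (- x)) (is_deriveNid x 1).
by rewrite mulrN1; exact.
Qed.

Lemma is_derive_cosh (x : R) : is_derive x 1 cosh (sinh x).
Proof.
have -> : @cosh R = 2^-1 \*: (expR + fun y => expR (- y)).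
  by rewrite funeqE => y; rewrite /cosh /= mulrC.
apply: is_derive_eq
  (is_deriveZ _ (is_deriveD (is_derive_expR x) (is_derive_expRN x))) _.
by rewrite /sinh mulrC.
Qed.

Lemma is_derive_sinh (x : R) : is_derive x 1 sinh (cosh x).
Proof.
have -> : sinh = 2^-1 \*: (expR - fun y => expR (- y)).
  by rewrite funeqE => y; rewrite /sinh /= mulrC.
apply: is_derive_eq
  (is_deriveZ _ (is_deriveB (is_derive_expR x) (is_derive_expRN x))) _.
by rewrite /cosh opprK mulrC.
Qed.

Lemma is_derive_lncosh (x : R) : is_derive x 1 (fun y => ln (cosh y)) (tanh x).
Proof.
rewrite /tanh mulrC.
exact: is_derive1_comp (is_derive1_ln (cosh_gt0 x)) (is_derive_cosh x).
Qed.

Lemma is_derive_tanh0 : is_derive (0 : R) 1 tanh 1.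
Proof.
have -> : tanh = sinh * (fun y => (cosh y)^-1) by [].
have cosh0_neq0 := lt0r_neq0 (cosh_gt0 0).
apply: is_derive_eq
  (is_deriveM (is_derive_sinh 0) (is_deriveV cosh0_neq0 (is_derive_cosh 0))) _.
by rewrite sinh0 cosh0 scaler0 scale0r add0r invr1 scale1r.
Qed.

End RealDerivative.

Section MatrixForms.
Variables (R : comNzRingType) (n : nat).
Implicit Types (M : 'M[R]_n) (u v w : 'cV[R]_n).

Definition mxform M u w : R := (u^T *m M *m w) 0 0.
Definition dotmx u w : R := (u^T *m w) 0 0.

Lemma mxformDl M u v w : mxform M (u + v) w = mxform M u w + mxform M v w.
Proof. by rewrite /mxform linearD /= !mulmxDl mxE. Qed.

Lemma mxformZl M (a : R) u w : mxform M (a *: u) w = a * mxform M u w.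
Proof. by rewrite /mxform linearZ /= -!scalemxAl mxE. Qed.

Lemma mxformDr M u v w : mxform M u (v + w) = mxform M u v + mxform M u w.
Proof. by rewrite /mxform mulmxDr mxE. Qed.

Lemma mxformZr M (a : R) u w : mxform M u (a *: w) = a * mxform M u w.
Proof. by rewrite /mxform -scalemxAr mxE. Qed.

Lemma mxform0l M w : mxform M 0 w = 0.
Proof. by rewrite /mxform trmx0 !mul0mx mxE. Qed.

Lemma mxform_delta M i j : mxform M (delta_mx i 0) (delta_mx j 0) = M i j.
Proof. by rewrite /mxform trmx_delta -rowE -colE !mxE. Qed.

Lemma mxform_dotmx M u w : mxform M u w = dotmx u (M *m w).
Proof. by rewrite /mxform /dotmx mulmxA. Qed.

Lemma dotmxDl u v w : dotmx (u + v) w = dotmx u w + dotmx v w.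
Proof. by rewrite /dotmx linearD /= mulmxDl mxE. Qed.

Lemma dotmxZl (a : R) u w : dotmx (a *: u) w = a * dotmx u w.
Proof. by rewrite /dotmx linearZ /= -scalemxAl mxE. Qed.

Lemma dotmxC u w : dotmx u w = dotmx w u.
Proof. by rewrite /dotmx -[u^T *m w]trmxK trmx_mul trmxK mxE. Qed.

Lemma dotmxDr u v w : dotmx u (v + w) = dotmx u v + dotmx u w.
Proof. by rewrite !(dotmxC u) dotmxDl. Qed.

Lemma dotmxZr (a : R) u w : dotmx u (a *: w) = a * dotmx u w.
Proof. by rewrite !(dotmxC u) dotmxZl. Qed.

Lemma dotmxNl u w : dotmx (- u) w = - dotmx u w.
Proof. by rewrite -scaleN1r dotmxZl mulN1r. Qed.

Lemma dotmxNr u w : dotmx u (- w) = - dotmx u w.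
Proof. by rewrite !(dotmxC u) dotmxNl. Qed.

Lemma dotmx_parallelogram u w :
  dotmx (u + w) (u + w) + dotmx (u - w) (u - w) = 2 * (dotmx u u + dotmx w w).
Proof. by rewrite !(dotmxDl, dotmxDr, dotmxNl, dotmxNr) (dotmxC w u); ring. Qed.

Lemma dotmx_mulmxr M u w : dotmx u (M *m w) = dotmx (M^T *m u) w.
Proof. by rewrite /dotmx trmx_mul trmxK mulmxA. Qed.

Lemma dotmx_orthogonal M u w :
  M^T *m M = 1%:M -> dotmx (M *m u) (M *m w) = dotmx u w.
Proof. by move=> MtM; rewrite dotmx_mulmxr mulmxA MtM mul1mx. Qed.

End MatrixForms.

Section EuclideanNorm.
Variables (R : realDomainType) (n : nat).
Implicit Types v : 'cV[R]_n.

Lemma dotmx_sqr v : dotmx v v = \sum_i v i 0 ^+ 2.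
Proof. by rewrite /dotmx mxE; apply: eq_bigr => i _; rewrite mxE. Qed.

Lemma dotmx_ge0 v : 0 <= dotmx v v.
Proof. by rewrite dotmx_sqr sumr_ge0 // => i _; rewrite sqr_ge0. Qed.

Lemma dotmx_gt0 v : v != 0 -> 0 < dotmx v v.
Proof.
move=> v_neq0; rewrite lt_def dotmx_ge0 andbT dotmx_sqr.
apply: contra v_neq0 => /eqP /psumr_eq0P v2_eq0.
apply/eqP/matrixP => i j; rewrite (ord1 j) mxE.
by apply/eqP; rewrite -sqrf_eq0 v2_eq0 // => k _; rewrite sqr_ge0.
Qed.

End EuclideanNorm.

Section MxformDerive.
Variables (R : realType) (n : nat) (M : 'M[R]_n).
Implicit Types u w y : 'cV[R]_n.

Lemma is_derive_mxforml w y u : is_derive y u (mxform M ^~ w) (mxform M u w).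
Proof.
apply: is_derive_line; under eq_fun do rewrite mxformDl mxformZl.
exact: is_derive_affine.
Qed.

Lemma is_derive_mxformr w y u : is_derive y u (mxform M w) (mxform M w u).
Proof.
apply: is_derive_line; under eq_fun do rewrite mxformDr mxformZr.
exact: is_derive_affine.
Qed.

Lemma is_derive_comp_mxforml (f : R -> R) (a : R) w y u :
  is_derive (mxform M y w) 1 f a ->
  is_derive y u (fun x => f (mxform M x w)) (a * mxform M u w).
Proof.
move=> fa; apply: is_derive_line; under eq_fun do rewrite mxformDl mxformZl.
by apply: is_derive_comp_affine; rewrite mul0r add0r.
Qed.

Lemma is_derive_mxform_diag y u :
  is_derive y u (fun x => mxform M x x) (mxform M u y + mxform M y u).
Proof.
apply: is_derive_line.
set b := mxform M u y + mxform M y u.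
have -> : (fun h => mxform M (h *: u + y) (h *: u + y)) =
    id * (fun h => h * mxform M u u + b) + cst (mxform M y y).
  rewrite funeqE => h.
  by rewrite !fctE mxformDl !mxformDr !mxformZl !mxformZr /b; ring.
apply: is_derive_eq.
by rewrite scale0r mul0r !add0r addr0 [_%:A]mulr1.
Qed.

End MxformDerive.

Section PotentialHessian.
Variables (R : realType) (n : nat) (M : 'M[R]_n) (g dg : R -> R).
Hypothesis g_dg : forall x : R, is_derive x 1 g (dg x).
Local Notation e := (ebasis n).

(* [phiN n alpha beta] is convertible to [potential (circA n alpha beta) (ln \o cosh)]. *)
Definition potential (x : 'cV[R]_n) : R :=
  2^-1 * mxform M x x - \sum_(k < n) g (mxform M x (e k)).

Definition dpotential (u y : 'cV[R]_n) : R :=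
  2^-1 * (mxform M u y + mxform M y u)
  - \sum_(k < n) mxform M u (e k) * dg (mxform M y (e k)).

Lemma derive_potential u y : 'D_u potential y = dpotential u y.
Proof.
have -> : potential = 2^-1 \*: (fun x => mxform M x x)
                      - \sum_(k < n) (fun x => g (mxform M x (e k))).
  by rewrite funeqE => x; rewrite !fctE fct_sumE.
apply: derive_val; apply: is_derive_eq.
  apply: is_deriveB (is_deriveZ _ (is_derive_mxform_diag M y u)) _.
  exact: is_derive_sum (fun k => is_derive_comp_mxforml u (g_dg _)).
by rewrite /dpotential; congr (_ - _); apply: eq_bigr => k _; rewrite mulrC.
Qed.

Lemma hessian_potential0 (d2g0 : R) : is_derive (0 : R) 1 dg d2g0 ->
  hessian n potential 0 = 2^-1 *: (M + M^T) - d2g0 *: (M *m M^T).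
Proof.
move=> dg_d2g0; apply/matrixP => i j; rewrite !mxE.
have -> : (fun y => 'D_(e j) potential y) =
    2^-1 \*: (mxform M (e j) + mxform M ^~ (e j))
    - \sum_(k < n) mxform M (e j) (e k) \*: (fun x => dg (mxform M x (e k))).
  by rewrite funeqE => y; rewrite derive_potential !fctE fct_sumE.
have dg0 k : is_derive (mxform M 0 (e k)) 1 dg d2g0 by rewrite mxform0l.
apply: derive_val; apply: is_derive_eq.
  apply: is_deriveB.
    apply: is_deriveZ.
    exact: is_deriveD (is_derive_mxformr M _ _ _) (is_derive_mxforml M _ _ _).
  apply: is_derive_sum => k.
  exact: is_deriveZ _ (is_derive_comp_mxforml _ (dg0 k)).
rewrite /ebasis !mxform_delta [M j i + _]addrC mulr_sumr.
congr (_ - _); apply: eq_bigr => k _.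
by rewrite !mxform_delta !mxE [_ *: _]mulrCA [M j k * _]mulrC.
Qed.

Lemma hessian_potential0_sym (d2g0 : R) :
  M^T = M -> is_derive (0 : R) 1 dg d2g0 ->
  hessian n potential 0 = M - d2g0 *: (M *m M).
Proof.
move=> M_sym dg_d2g0; rewrite hessian_potential0 // M_sym.
rewrite -mulr2n -scalerMnr scalerMnl -mulr_natl mulfV ?pnatr_eq0 //.
by rewrite scale1r.
Qed.

End PotentialHessian.

Lemma pmulrD_gt0 (R : realDomainType) (a b x y : R) :
  0 < a -> 0 < b -> 0 <= x -> 0 <= y -> 0 < x + y -> 0 < a * x + b * y.
Proof.
move=> a_gt0 b_gt0 x_ge0 y_ge0 xy_gt0.
have ax_ge0 := mulr_ge0 (ltW a_gt0) x_ge0.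
have by_ge0 := mulr_ge0 (ltW b_gt0) y_ge0.
have [x_gt0 | x_le0] := ltP 0 x.
  by have := mulr_gt0 a_gt0 x_gt0; lra.
have y_gt0 : 0 < y by lra.
by have := mulr_gt0 b_gt0 y_gt0; lra.
Qed.

Section SymmetrizedOrthogonal.
Variables (R : realFieldType) (n : nat) (P : 'M[R]_n) (alpha beta : R).
Hypothesis PtP : P^T *m P = 1%:M.
Implicit Types v : 'cV[R]_n.
Let A : 'M[R]_n := beta%:M + alpha *: (P + P^T).

Lemma trmx_symmetrized : A^T = A.
Proof.
by rewrite /A linearD /= tr_scalar_mx linearZ /= linearD /= trmxK [P^T + _]addrC.
Qed.

Lemma mxform_sub_sqr_sos v :
  mxform (A - A *m A) v v =
    (beta + 2 * alpha) * (1 - (beta + 2 * alpha)) / 4 * dotmx (v + P *m v) (v + P *m v)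
  + (beta - 2 * alpha) * (1 - (beta - 2 * alpha)) / 4 * dotmx (v - P *m v) (v - P *m v)
  + alpha ^+ 2 * dotmx (P *m v - P^T *m v) (P *m v - P^T *m v).
Proof.
rewrite mxform_dotmx mulmxBl [in LHS]dotmxDr dotmxNr -mulmxA.
rewrite (dotmx_mulmxr A v (A *m v)) trmx_symmetrized.
have -> : A *m v = beta *: v + alpha *: (P *m v + P^T *m v).
  by rewrite mulmxDl mul_scalar_mx -scalemxAl mulmxDl.
set u := P *m v; set w := P^T *m v.
have uu : dotmx u u = dotmx v v by exact: dotmx_orthogonal.
have ww : dotmx w w = dotmx v v by apply: dotmx_orthogonal; rewrite trmxK mulmx1C.
have wv : dotmx w v = dotmx u v by rewrite dotmxC dotmx_mulmxr trmxK.
rewrite !(dotmxDl, dotmxDr, dotmxNl, dotmxNr, dotmxZl, dotmxZr).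
rewrite (dotmxC v u) (dotmxC v w) (dotmxC w u) uu ww wv.
by field.
Qed.

Lemma mxform_sub_sqr_ge0 v :
  0 <= alpha -> 2 * alpha <= beta -> beta + 2 * alpha <= 1 ->
  0 <= mxform (A - A *m A) v v.
Proof.
move=> alpha_ge0 m_ge0 mu_le1; rewrite mxform_sub_sqr_sos.
have c1_ge0 : 0 <= (beta + 2 * alpha) * (1 - (beta + 2 * alpha)).
  by apply: mulr_ge0; lra.
have c2_ge0 : 0 <= (beta - 2 * alpha) * (1 - (beta - 2 * alpha)).
  by apply: mulr_ge0; lra.
apply: addr_ge0; [apply: addr_ge0|]; apply: mulr_ge0.
all: by rewrite ?divr_ge0 ?sqr_ge0 ?dotmx_ge0.
Qed.

Lemma mxform_sub_sqr_gt0 v :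
  0 <= alpha -> 2 * alpha < beta -> beta + 2 * alpha < 1 ->
  v != 0 -> 0 < mxform (A - A *m A) v v.
Proof.
move=> alpha_ge0 m_gt0 mu_lt1 v_neq0; rewrite mxform_sub_sqr_sos.
apply: ltr_wpDr; first by rewrite mulr_ge0 ?sqr_ge0 ?dotmx_ge0.
apply: pmulrD_gt0; rewrite ?dotmx_ge0 //.
- by apply: divr_gt0 => //; apply: mulr_gt0; lra.
- by apply: divr_gt0 => //; apply: mulr_gt0; lra.
rewrite dotmx_parallelogram (dotmx_orthogonal v v PtP).
by rewrite mulr_gt0 ?addr_gt0 ?dotmx_gt0.
Qed.

Lemma mxform_sub_sqr_fixed v : P *m v = v ->
  mxform (A - A *m A) v v = (beta + 2 * alpha) * (1 - (beta + 2 * alpha)) * dotmx v v.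
Proof.
move=> Pv; have Ptv : P^T *m v = v by rewrite -{1}Pv mulmxA PtP mul1mx.
rewrite mxform_sub_sqr_sos Ptv Pv !(dotmxDl, dotmxDr, dotmxNl, dotmxNr).
by field.
Qed.

End SymmetrizedOrthogonal.

Section ShiftMatrix.
Variables (R : realType) (n : nat).

Lemma shift_mx_perm : shift_mx n = perm_mx (perm (@ordS_inj n)) :> 'M[R]_n.
Proof. by apply/matrixP => i j; rewrite !mxE permE eq_sym. Qed.

Lemma trmx_shift_mx_mul : (shift_mx n)^T *m shift_mx n = 1%:M :> 'M[R]_n.
Proof. by rewrite shift_mx_perm tr_perm_mx -perm_mxM mulVg perm_mx1. Qed.

Lemma shift_mx_const (a : R) : shift_mx n *m const_mx a = const_mx a :> 'cV[R]_n.
Proof. by rewrite shift_mx_perm -row_permE row_perm_const. Qed.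

End ShiftMatrix.

Theorem lemma4p2 (R : realType) (n : nat) (alpha beta : R) :
  (0 < n)%N -> 0 < 2 * alpha -> 2 * alpha < beta ->
  let H := hessian n (phiN n alpha beta) 0 in
  [/\ beta + 2 * alpha < 1 -> posdef n H,
      beta + 2 * alpha = 1 -> possemidef n H
    & 1 < beta + 2 * alpha -> ~ posdef n H /\ ~ possemidef n H].
Proof.
move=> n_gt0 alpha_gt0 m_gt0 H.
set A := circA n alpha beta.
have alpha_ge0 : 0 <= alpha by lra.
have PtP := @trmx_shift_mx_mul R n.
have -> : H = A - A *m A.
  have A_sym : A^T = A := trmx_symmetrized _ _ _.
  have hessA := hessian_potential0_sym (@is_derive_lncosh R) A_sym (@is_derive_tanh0 R).
  by rewrite /H hessA scale1r.
split=> [mu_lt1 v | mu_eq1 v | mu_gt1].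
- exact: mxform_sub_sqr_gt0.
- by apply: mxform_sub_sqr_ge0 => //; lra.
pose ones : 'cV[R]_n := const_mx 1.
have ones_neq0 : ones != 0.
  apply/eqP => /matrixP /(_ (Ordinal n_gt0) 0).
  by rewrite !mxE => /eqP; rewrite oner_eq0.
have form_lt0 : mxform (A - A *m A) ones ones < 0.
  rewrite (mxform_sub_sqr_fixed _ _ PtP (shift_mx_const _ _)).
  by rewrite pmulr_llt0 ?dotmx_gt0 // pmulr_rlt0; lra.
split=> [posH | psdH].
- by have := posH _ ones_neq0; rewrite ltNge (ltW form_lt0).
- by have := psdH ones; rewrite leNgt form_lt0.
Qed.
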